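(* Consider simultaneous two-player weighted congestion games with affine costs and proportional cost functions, where the player weights $w_1,w_2\ge0$ (with $w_1+w_2>0$) are arbitrary. The price of anarchy (supremum over all weights and all instances, with respect to pure Nash equilibria) is approximately $2.0411$, both for general congestion games and for network routing games, and it is attained for $w_1/w_2 \approx 1.2704$ and for $w_2/w_1\approx 1.2704$.
   Context: A weighted two-player congestion game with affine costs consists of a finite set $R$ of resources, coefficients $\alpha_r,\beta_r \geq 0$ for each $r\in R$, two players $i=1,2$ with weights $w_i\ge 0$, and for each player $i$ a nonempty finite set $\mathcal{A}_i \subseteq 2^R$ of actions. For an action profile $A=(A_1,A_2)$ the load of $r$ is $x_r(A)=\sum_{j:\, r\in A_j} w_j$. With proportional costs, player $i$ pays $C_i(A)=w_i\sum_{r\in A_i}(\alpha_r+\beta_r x_r(A))$. The social cost is $C(A)=C_1(A)+C_2(A)$. In a network routing game, $R$ is the arc set of a directed graph, player $i$ has a source $s_i$ and sink $t_i$, and $\mathcal{A}_i$ is the set of arc sets of directed $s_i$–$t_i$ paths. A pure Nash equilibrium is a profile from which no player can lower her cost by unilaterally changing her action. The price of anarchy of an instance is the maximum over Nash equilibria $A$ of $C(A)/\min_{A'} C(A')$; the price of anarchy of a class is the supremum over all instances (with positive optimal social cost). *)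

From HB Require Import structures.
From mathcomp Require Import all_boot all_order all_algebra.
From mathcomp Require Import reals.
Set Implicit Arguments.
Unset Strict Implicit.
Unset Printing Implicit Defensive.
Import Order.TTheory GRing.Theory Num.Theory.
Local Open Scope ring_scope.

Record cgame (T : finType) (R : realType) := CGame {
  alpha : T -> R;
  beta  : T -> R;
  w1 : R;
  w2 : R;
  acts1 : {set {set T}};
  acts2 : {set {set T}} }.

Section Game.
Variables (T : finType) (R : realType) (g : cgame T R).

Definition wf_game : Prop :=
  (forall r, 0 <= alpha g r) /\ (forall r, 0 <= beta g r) /\
  0 <= w1 g /\ 0 <= w2 g /\ 0 < w1 g + w2 g /\
  acts1 g != set0 /\ acts2 g != set0.

Definition feasible (A : {set T} * {set T}) : bool :=
  (A.1 \in acts1 g) && (A.2 \in acts2 g).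

Definition load (A : {set T} * {set T}) (r : T) : R :=
  (if r \in A.1 then w1 g else 0) + (if r \in A.2 then w2 g else 0).

Definition cost1 (A : {set T} * {set T}) : R :=
  w1 g * \sum_(r in A.1) (alpha g r + beta g r * load A r).
Definition cost2 (A : {set T} * {set T}) : R :=
  w2 g * \sum_(r in A.2) (alpha g r + beta g r * load A r).

Definition social_cost (A : {set T} * {set T}) : R := cost1 A + cost2 A.

Definition is_NE (A : {set T} * {set T}) : Prop :=
  feasible A /\
  (forall B1, B1 \in acts1 g -> cost1 A <= cost1 (B1, A.2)) /\
  (forall B2, B2 \in acts2 g -> cost2 A <= cost2 (A.1, B2)).

Definition is_opt (o : R) : Prop :=
  (exists B, feasible B /\ social_cost B = o) /\
  (forall B, feasible B -> o <= social_cost B).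
End Game.

(* Directed (multi)graph with vertex set V and arc set T given by tail/head. *)
Fixpoint walk (T V : finType) (tl hd : T -> V) (s t : V) (es : seq T) : bool :=
  match es with
  | [::] => s == t
  | e :: es' => (tl e == s) && walk tl hd (hd e) t es'
  end.

Definition st_path (T V : finType) (tl hd : T -> V) (s t : V) (P : {set T}) : Prop :=
  exists es : seq T,
    walk tl hd s t es /\ uniq (s :: map hd es) /\ P = [set e | e \in es].

Definition is_network (T : finType) (R : realType) (g : cgame T R) : Prop :=
  exists (V : finType) (tl hd : T -> V) (s1 t1 s2 t2 : V),
    (forall P, P \in acts1 g <-> st_path tl hd s1 t1 P) /\
    (forall P, P \in acts2 g <-> st_path tl hd s2 t2 P).

Definition poa_ratios (R : realType) (network : bool) (wcond : R -> R -> Prop)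
    (x : R) : Prop :=
  exists (T : finType) (g : cgame T R) (A : {set T} * {set T}) (o : R),
    wf_game g /\ (network -> is_network g) /\ wcond (w1 g) (w2 g) /\
    is_NE g A /\ is_opt g o /\ 0 < o /\ x = social_cost g A / o.

Definition is_sup (R : realType) (S : R -> Prop) (v : R) : Prop :=
  (forall x, S x -> x <= v) /\
  (forall e, 0 < e -> exists x, S x /\ v - e < x).

Definition price_of_anarchy (R : realType) (network : bool)
    (wcond : R -> R -> Prop) (v : R) : Prop :=
  is_sup (poa_ratios network wcond) v.

From HB Require Import structures.
From mathcomp Require Import all_boot all_order all_algebra.
From mathcomp Require Import reals.
From mathcomp Require Import ring lra.
Import Order.TTheory GRing.Theory Num.Theory.
Local Open Scope ring_scope.
Set Implicit Arguments.
Unset Strict Implicit.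

(* For weights w1 >= w2, adding the two Nash conditions of an equilibrium A
   against a profile B with multipliers V w1 and w1 + w2 and comparing resource
   by resource gives C(A) <= V C(B) whenever V >= num(w1, w2) / den(w1, w2),
   where num(x, y) = x^3 + 2x^2y + 2xy^2 + y^3 and den(x, y) = x^3 + xy^2 + y^3;
   the case w1 < w2 follows by exchanging the players.  The ratio
   num(r, 1) / den(r, 1) is maximal at the root r ~ 1.2704 of its derivative,
   where it is ~ 2.0411 and dominates num(x, y) / den(x, y) for all x, y >= 0;
   a six-arc network with weights r and 1 has an equilibrium of exactly this
   ratio. *)

Section WeightedPoA.
Variable R : realType.
Implicit Types (x y V : R).

Definition weight_poa_num x y := x ^+ 3 + 2 * x ^+ 2 * y + 2 * x * y ^+ 2 + y ^+ 3.
Definition weight_poa_den x y := x ^+ 3 + x * y ^+ 2 + y ^+ 3.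

Definition dominates_weight_poa V :=
  forall x y, 0 <= x -> 0 <= y -> weight_poa_num x y <= V * weight_poa_den x y.

Lemma weight_poa_den_gt0 x y : 0 < x -> 0 <= y -> 0 < weight_poa_den x y.
Proof.
move=> x_gt0 y_ge0; rewrite /weight_poa_den.
have := exprn_gt0 3 x_gt0; have := exprn_ge0 3 y_ge0.
have := mulr_ge0 (ltW x_gt0) (exprn_ge0 2 y_ge0); lra.
Qed.

Lemma dominates_weight_poa_ge2 V : dominates_weight_poa V -> 2 <= V.
Proof.
move=> /(_ 1 1 ler01 ler01); rewrite /weight_poa_num /weight_poa_den.
by rewrite !expr1n !mulr1; lra.
Qed.
End WeightedPoA.

Section Resource.
Variables (R : realType) (w1 w2 : R).

Definition res_load (a1 a2 : bool) : R := (if a1 then w1 else 0) + (if a2 then w2 else 0).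
Definition res_cost1 (al be : R) (a1 a2 : bool) : R :=
  if a1 then w1 * (al + be * res_load a1 a2) else 0.
Definition res_cost2 (al be : R) (a1 a2 : bool) : R :=
  if a2 then w2 * (al + be * res_load a1 a2) else 0.

Lemma res_cost1_lin (al be : R) a1 a2 :
  res_cost1 al be a1 a2 = al * res_cost1 1 0 a1 a2 + be * res_cost1 0 1 a1 a2.
Proof. by rewrite /res_cost1; case: a1; [ring | rewrite !mulr0 addr0]. Qed.

Lemma res_cost2_lin (al be : R) a1 a2 :
  res_cost2 al be a1 a2 = al * res_cost2 1 0 a1 a2 + be * res_cost2 0 1 a1 a2.
Proof. by rewrite /res_cost2; case: a2; [ring | rewrite !mulr0 addr0]. Qed.

Lemma res_cost_nash_ineq (V al be : R) (a1 a2 b1 b2 : bool) :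
  0 <= w2 <= w1 -> 2 <= V -> 0 <= al -> 0 <= be ->
  weight_poa_num w1 w2 <= V * weight_poa_den w1 w2 ->
  (w1 + w2) * (res_cost1 al be a1 a2 + res_cost2 al be a1 a2
               - V * (res_cost1 al be b1 b2 + res_cost2 al be b1 b2))
  <= V * w1 * (res_cost1 al be a1 a2 - res_cost1 al be b1 a2)
     + (w1 + w2) * (res_cost2 al be a1 a2 - res_cost2 al be a1 b2).
Proof.
move=> /andP[w2_ge0 w21] V_ge2 al_ge0 be_ge0 hw.
set c1 := res_cost1 1 0; set c2 := res_cost2 1 0.
set d1 := res_cost1 0 1; set d2 := res_cost2 0 1.
have [hc hd] : (w1 + w2) * (c1 a1 a2 + c2 a1 a2 - V * (c1 b1 b2 + c2 b1 b2))
      <= V * w1 * (c1 a1 a2 - c1 b1 a2) + (w1 + w2) * (c2 a1 a2 - c2 a1 b2) /\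
    (w1 + w2) * (d1 a1 a2 + d2 a1 a2 - V * (d1 b1 b2 + d2 b1 b2))
      <= V * w1 * (d1 a1 a2 - d1 b1 a2) + (w1 + w2) * (d2 a1 a2 - d2 a1 b2).
  (* With w1 = w2 + d and V = 2 + e, each of the 32 cases is a linear
     consequence of hw and the nonnegativity of the monomials in w2, d, e. *)
  have w1_split : w1 = w2 + (w1 - w2) by ring.
  have V_split : V = 2 + (V - 2) by ring.
  have d_ge0 : 0 <= w1 - w2 by lra.
  have e_ge0 : 0 <= V - 2 by lra.
  move: hw; rewrite /c1 /c2 /d1 /d2 /res_cost1 /res_cost2 /res_load.
  rewrite /weight_poa_num /weight_poa_den {}V_split {}w1_split.
  move: (w1 - w2) d_ge0 (V - 2) e_ge0 => d d_ge0 e e_ge0 hw.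
  have ww := mulr_ge0 w2_ge0 w2_ge0; have wd := mulr_ge0 w2_ge0 d_ge0.
  have dd := mulr_ge0 d_ge0 d_ge0.
  have www := mulr_ge0 ww w2_ge0; have wwd := mulr_ge0 ww d_ge0.
  have wdd := mulr_ge0 dd w2_ge0; have ddd := mulr_ge0 dd d_ge0.
  have wwe := mulr_ge0 ww e_ge0; have wde := mulr_ge0 wd e_ge0.
  have dde := mulr_ge0 dd e_ge0; have wwwe := mulr_ge0 www e_ge0.
  have wwde := mulr_ge0 wwd e_ge0; have wdde := mulr_ge0 wdd e_ge0.
  have ddde := mulr_ge0 ddd e_ge0.
  by split; case: a1; case: a2; case: b1; case: b2 => /=; lra.
rewrite !(res_cost1_lin al be) !(res_cost2_lin al be) -/c1 -/c2 -/d1 -/d2.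
have := ler_wpM2l al_ge0 hc; have := ler_wpM2l be_ge0 hd; lra.
Qed.
End Resource.

Section Symmetry.
Variables (T : finType) (R : realType).
Implicit Types (g : cgame T R) (A : {set T} * {set T}).

Definition swap_game g : cgame T R :=
  CGame (alpha g) (beta g) (w2 g) (w1 g) (acts2 g) (acts1 g).

Definition swap_profile A : {set T} * {set T} := (A.2, A.1).

Lemma swap_profileK : involutive swap_profile. Proof. by case. Qed.

Lemma load_swap g A : load (swap_game g) (swap_profile A) =1 load g A.
Proof. by move=> r; rewrite /load addrC. Qed.

Lemma cost1_swap g A : cost1 (swap_game g) (swap_profile A) = cost2 g A.
Proof. by rewrite /cost1 /cost2; under eq_bigr do rewrite load_swap. Qed.

Lemma cost2_swap g A : cost2 (swap_game g) (swap_profile A) = cost1 g A.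
Proof. by rewrite /cost1 /cost2; under eq_bigr do rewrite load_swap. Qed.

Lemma social_cost_swap g A : social_cost (swap_game g) (swap_profile A) = social_cost g A.
Proof. by rewrite /social_cost cost1_swap cost2_swap addrC. Qed.

Lemma feasible_swap g A : feasible (swap_game g) (swap_profile A) = feasible g A.
Proof. exact: andbC. Qed.

Lemma wf_game_swap g : wf_game g -> wf_game (swap_game g).
Proof. by rewrite /wf_game /= addrC => -[? [? [? [? [? [? ?]]]]]]. Qed.

Lemma is_NE_swap g A : is_NE g A -> is_NE (swap_game g) (swap_profile A).
Proof.
move=> [fA [NE1 NE2]]; split; first by rewrite feasible_swap.
split=> B hB.
- by move: (NE2 B hB); rewrite -!cost1_swap.
- by move: (NE1 B hB); rewrite -!cost2_swap.
Qed.

Lemma is_opt_swap g o : is_opt g o -> is_opt (swap_game g) o.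
Proof.
move=> [[B0 [fB0 <-]] optB]; split.
  by exists (swap_profile B0); rewrite feasible_swap social_cost_swap.
move=> B; rewrite -(swap_profileK B) feasible_swap social_cost_swap; exact: optB.
Qed.

Lemma is_network_swap g : is_network g -> is_network (swap_game g).
Proof.
by move=> [V [tl [hd [s1 [t1 [s2 [t2 [h1 h2]]]]]]]]; exists V, tl, hd, s2, t2, s1, t1.
Qed.
End Symmetry.

Section UpperBound.
Variables (T : finType) (R : realType).
Implicit Types (g : cgame T R) (A B : {set T} * {set T}).

Lemma cost1E g A : cost1 g A =
  \sum_r res_cost1 (w1 g) (w2 g) (alpha g r) (beta g r) (r \in A.1) (r \in A.2).
Proof. by rewrite /cost1 mulr_sumr big_mkcond. Qed.

Lemma cost2E g A : cost2 g A =
  \sum_r res_cost2 (w1 g) (w2 g) (alpha g r) (beta g r) (r \in A.1) (r \in A.2).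
Proof. by rewrite /cost2 mulr_sumr big_mkcond. Qed.

Lemma NE_social_cost_le_ordered g (V : R) A B :
  wf_game g -> w2 g <= w1 g -> dominates_weight_poa V -> is_NE g A -> feasible g B ->
  social_cost g A <= V * social_cost g B.
Proof.
move=> [al_ge0 [be_ge0 [w1_ge0 [w2_ge0 [w_gt0 _]]]]] w21 domV [_ [NE1 NE2]] /andP[B1 B2].
have V_ge2 := dominates_weight_poa_ge2 domV.
have w_ord : 0 <= w2 g <= w1 g by rewrite w2_ge0.
have local r := res_cost_nash_ineq (r \in A.1) (r \in A.2) (r \in B.1) (r \in B.2) w_ord V_ge2
  (al_ge0 r) (be_ge0 r) (domV _ _ w1_ge0 w2_ge0).
have := ler_sum (index_enum T) (fun r (_ : true) => local r).
rewrite !(sumrB, big_split, =^~mulr_sumr) /= -(cost1E g (B.1, A.2)) -(cost2E g (A.1, B.2)).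
rewrite -!cost1E -!cost2E -/(social_cost g A) -/(social_cost g B) => combined.
have dev1 : V * w1 g * (cost1 g A - cost1 g (B.1, A.2)) <= 0.
  by apply: mulr_ge0_le0; [apply: mulr_ge0; lra | rewrite subr_le0 NE1].
have dev2 : (w1 g + w2 g) * (cost2 g A - cost2 g (A.1, B.2)) <= 0.
  by apply: mulr_ge0_le0; [exact: ltW | rewrite subr_le0 NE2].
by rewrite -subr_le0 -(pmulr_rle0 _ w_gt0); lra.
Qed.

Lemma NE_social_cost_le g (V : R) A B :
  wf_game g -> dominates_weight_poa V -> is_NE g A -> feasible g B ->
  social_cost g A <= V * social_cost g B.
Proof.
move=> wf domV NE fB.
have [w21 | /ltW w12] := leP (w2 g) (w1 g); first exact: NE_social_cost_le_ordered.
rewrite -social_cost_swap -(social_cost_swap g B).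
apply: NE_social_cost_le_ordered => //; first exact: wf_game_swap.
- exact: is_NE_swap.
- by rewrite feasible_swap.
Qed.
End UpperBound.

Section CriticalRatio.
Variable R : realType.

(* Up to sign, the numerator of the derivative of
   r |-> weight_poa_num r 1 / weight_poa_den r 1. *)
Definition poa_crit_poly (r : R) := 2 * r ^+ 4 + 2 * r ^+ 3 - 2 * r ^+ 2 - 4 * r - 1.

Lemma poa_crit_poly_ivt (a b : R) : a <= b -> poa_crit_poly a <= 0 <= poa_crit_poly b ->
  exists r, a <= r <= b /\ poa_crit_poly r = 0.
Proof.
pose p : {poly R} := 2%:P * 'X^4 + 2%:P * 'X^3 - 2%:P * 'X^2 - 4%:P * 'X - 1.
have pE x : p.[x] = poa_crit_poly x by rewrite /p /poa_crit_poly !hornerE.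
rewrite -!pE => a_le_b sign_change.
have [r r_bounds /eqP root_r] := poly_ivt a_le_b sign_change.
by exists r; rewrite -pE.
Qed.

Lemma poa_crit_poly_root :
  exists r : R, 127036%:R / 100000%:R <= r <= 127037%:R / 100000%:R /\ poa_crit_poly r = 0.
Proof.
by apply: poa_crit_poly_ivt; rewrite /poa_crit_poly; [lra | apply/andP; split; lra].
Qed.

Lemma dominates_weight_poa_crit (r : R) : 0 < r -> poa_crit_poly r = 0 ->
  dominates_weight_poa (weight_poa_num r 1 / weight_poa_den r 1).
Proof.
move=> r_gt0 crit x y x_ge0 y_ge0.
have den_gt0 := weight_poa_den_gt0 r_gt0 ler01.
rewrite mulrAC ler_pdivlMr // -subr_ge0 -(pmulr_rge0 _ (exprn_gt0 2 r_gt0)).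
have -> : r ^+ 2 * (weight_poa_num r 1 * weight_poa_den x y
                     - weight_poa_num x y * weight_poa_den r 1)
    = (2 * r ^+ 2 + r) * (x - r * y) ^+ 2 * (r ^+ 2 * x + y)
      + poa_crit_poly r * (r * x ^+ 2 * y - r ^+ 2 * x * y ^+ 2).
  by rewrite /weight_poa_num /weight_poa_den /poa_crit_poly; ring.
rewrite crit mul0r addr0; apply: mulr_ge0; first apply: mulr_ge0.
- by have := exprn_gt0 2 r_gt0; lra.
- exact: sqr_ge0.
- by have := exprn_gt0 2 r_gt0; nra.
Qed.

Lemma weight_poa_crit_approx (r : R) :
  127036%:R / 100000%:R <= r <= 127037%:R / 100000%:R -> poa_crit_poly r = 0 ->
  `|weight_poa_num r 1 / weight_poa_den r 1 - 20411%:R / 10000%:R| < 1 / 10000%:R.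
Proof.
move=> /andP[r_lo r_hi] crit.
have r_gt0 : 0 < r by lra.
have den_gt0 := weight_poa_den_gt0 r_gt0 ler01.
have := dominates_weight_poa_crit r_gt0 crit (ler0n _ 127) (ler0n _ 100).
set V := weight_poa_num r 1 / _; rewrite /weight_poa_num /weight_poa_den => V_lo.
rewrite ltr_norml; apply/andP; split; first by lra.
suff : V < 20412%:R / 10000%:R by lra.
rewrite /V ltr_pdivrMr // /weight_poa_num /weight_poa_den !expr1n !mulr1.
have h1 : 0 <= r - 127036%:R / 100000%:R by lra.
have h2 : 0 <= 127037%:R / 100000%:R - r by lra.
nra.
Qed.
End CriticalRatio.

Inductive vertex := S1 | S2 | U | W | Tgt.

Definition vertex_to_nat (v : vertex) : nat :=
  match v with S1 => 0 | S2 => 1 | U => 2 | W => 3 | Tgt => 4 end.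
Definition nat_to_vertex (n : nat) : vertex :=
  match n with 0 => S1 | 1 => S2 | 2 => U | 3 => W | _ => Tgt end.
Lemma vertex_to_natK : cancel vertex_to_nat nat_to_vertex. Proof. by case. Qed.
HB.instance Definition _ := Countable.copy vertex (can_type vertex_to_natK).
Lemma vertex_enumP : Finite.axiom [:: S1; S2; U; W; Tgt]. Proof. by case. Qed.
HB.instance Definition _ := isFinite.Build vertex vertex_enumP.

Inductive arc := S1U | S1W | S2U | S2W | UT | WT.

Definition arc_to_nat (e : arc) : nat :=
  match e with S1U => 0 | S1W => 1 | S2U => 2 | S2W => 3 | UT => 4 | WT => 5 end.
Definition nat_to_arc (n : nat) : arc :=
  match n with 0 => S1U | 1 => S1W | 2 => S2U | 3 => S2W | 4 => UT | _ => WT end.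
Lemma arc_to_natK : cancel arc_to_nat nat_to_arc. Proof. by case. Qed.
HB.instance Definition _ := Countable.copy arc (can_type arc_to_natK).
Lemma arc_enumP : Finite.axiom [:: S1U; S1W; S2U; S2W; UT; WT]. Proof. by case. Qed.
HB.instance Definition _ := isFinite.Build arc arc_enumP.

Definition tail (e : arc) : vertex :=
  match e with S1U | S1W => S1 | S2U | S2W => S2 | UT => U | WT => W end.
Definition head (e : arc) : vertex :=
  match e with S1U | S2U => U | S1W | S2W => W | UT | WT => Tgt end.

Lemma st_path_S1 (P : {set arc}) :
  P \in [set [set S1W; WT]; [set S1U; UT]] <-> st_path tail head S1 Tgt P.
Proof.
split.
- case/set2P => ->; [exists [:: S1W; WT] | exists [:: S1U; UT]];
    by do !split; apply/setP => e; rewrite !inE; case: e.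
- move=> [es [walk_es [_ ->]]]; move: walk_es.
  case: es => [|[] [|[] [|[] es]]] //= _; apply/set2P; [right | left];
    by apply/setP => e; rewrite !inE; case: e.
Qed.

Lemma st_path_S2 (P : {set arc}) :
  P \in [set [set S2U; UT]; [set S2W; WT]] <-> st_path tail head S2 Tgt P.
Proof.
split.
- case/set2P => ->; [exists [:: S2U; UT] | exists [:: S2W; WT]];
    by do !split; apply/setP => e; rewrite !inE; case: e.
- move=> [es [walk_es [_ ->]]]; move: walk_es.
  case: es => [|[] [|[] [|[] es]]] //= _; apply/set2P; [left | right];
    by apply/setP => e; rewrite !inE; case: e.
Qed.

Section LowerBound.
Variable R : realType.

Definition tight_alpha (r : R) (e : arc) : R := if e is S2U then r ^+ 2 + r + 1 else 0.
Definition tight_beta (r : R) (e : arc) : R :=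
  match e with UT => r | WT => r + 1 | _ => 0 end.

Definition tight_game (r : R) : cgame arc R :=
  CGame (tight_alpha r) (tight_beta r) r 1
    [set [set S1W; WT]; [set S1U; UT]] [set [set S2U; UT]; [set S2W; WT]].

Definition tight_NE : {set arc} * {set arc} := ([set S1W; WT], [set S2U; UT]).
Definition tight_opt : {set arc} * {set arc} := ([set S1U; UT], [set S2W; WT]).

Lemma sum_set2 (F : arc -> R) (a b : arc) : a != b -> \sum_(e in [set a; b]) F e = F a + F b.
Proof. by move=> neq_ab; rewrite big_setU1 ?big_set1 // inE. Qed.

Ltac eval_costs := rewrite /social_cost /cost1 /cost2 /load /= ?sum_set2 // ?inE /=.

Lemma tight_game_wf (r : R) : 0 < r -> wf_game (tight_game r).
Proof.
move=> r_gt0; split; first by case; rewrite /= /tight_alpha //; nra.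
split; first by case; rewrite /= /tight_beta //; lra.
do !split => //=; try lra.
- by apply/set0Pn; exists [set S1W; WT]; rewrite !inE eqxx.
- by apply/set0Pn; exists [set S2U; UT]; rewrite !inE eqxx.
Qed.

Lemma tight_game_NE (r : R) : 0 < r -> is_NE (tight_game r) tight_NE.
Proof.
move=> r_gt0; split; first by rewrite /feasible /= !inE !eqxx.
by split=> B /set2P [] ->; eval_costs; nra.
Qed.

Lemma tight_game_opt (r : R) : 0 < r -> is_opt (tight_game r) (weight_poa_den r 1).
Proof.
move=> r_gt0; split.
  exists tight_opt; split; first by rewrite /feasible /= !inE !eqxx ?orbT.
  by eval_costs; rewrite /weight_poa_den; ring.
move=> [B1 B2] /andP [] /= /set2P [] -> /set2P [] ->; eval_costs; rewrite /weight_poa_den; nra.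
Qed.

Lemma tight_game_NE_cost (r : R) : social_cost (tight_game r) tight_NE = weight_poa_num r 1.
Proof. by eval_costs; rewrite /weight_poa_num; ring. Qed.
End LowerBound.

Lemma is_network_tight_game (R : realType) (r : R) : is_network (tight_game r).
Proof.
exists vertex, tail, head, S1, Tgt, S2, Tgt.
by split=> P; [exact: st_path_S1 | exact: st_path_S2].
Qed.

Lemma tight_game_poa_ratio (R : realType) (network : bool) (wcond : R -> R -> Prop) (r : R) :
  0 < r -> wcond r 1 -> poa_ratios network wcond (weight_poa_num r 1 / weight_poa_den r 1).
Proof.
move=> r_gt0 wc; exists arc, (tight_game r), tight_NE, (weight_poa_den r 1).
split; first exact: tight_game_wf.
split; first by move=> _; exact: is_network_tight_game.
do 2!split=> //; first exact: tight_game_NE.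
split; first exact: tight_game_opt.
by split; [exact: weight_poa_den_gt0 | rewrite tight_game_NE_cost].
Qed.

Lemma poa_ratios_swap (R : realType) (network : bool) (wcond : R -> R -> Prop) (x : R) :
  poa_ratios network wcond x -> poa_ratios network (fun a b => wcond b a) x.
Proof.
move=> [T [g [A [o [wf [net [wc [NE [opt [o_gt0 ->]]]]]]]]]].
exists T, (swap_game g), (swap_profile A), o; rewrite social_cost_swap.
split; first exact: wf_game_swap.
split; first by move/net/is_network_swap.
split=> //; split; first exact: is_NE_swap.
by split; first exact: is_opt_swap.
Qed.

Lemma price_of_anarchy_attained (R : realType) (network : bool) (wcond : R -> R -> Prop)
    (V : R) :
  dominates_weight_poa V -> poa_ratios network wcond V -> price_of_anarchy network wcond V.
Proof.
move=> domV attained; split; last by move=> e e_gt0; exists V; split => //; lra.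
move=> _ [T [g [A [o [wf [_ [_ [NE [[[B [fB <-]] _] [o_gt0 ->]]]]]]]]]].
by rewrite ler_pdivrMr //; exact: NE_social_cost_le.
Qed.

Theorem corollary2 (R : realType) :
  exists v : R,
    `|v - 20411%:R / 10000%:R| < 1 / 10000%:R /\
    price_of_anarchy false (fun _ _ => True) v /\
    price_of_anarchy true (fun _ _ => True) v /\
    exists rho : R,
      `|rho - 12704%:R / 10000%:R| < 1 / 10000%:R /\
      price_of_anarchy false (fun a b => a = rho * b) v /\
      price_of_anarchy true  (fun a b => a = rho * b) v /\
      price_of_anarchy false (fun a b => b = rho * a) v /\
      price_of_anarchy true  (fun a b => b = rho * a) v.
Proof.
have [r [r_bounds crit]] := poa_crit_poly_root R.
have r_gt0 : 0 < r by case/andP: r_bounds; lra.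
have domV := dominates_weight_poa_crit r_gt0 crit.
have poa network (wcond : R -> R -> Prop) : wcond r 1 ->
    price_of_anarchy network wcond (weight_poa_num r 1 / weight_poa_den r 1).
  by move=> wc; apply: price_of_anarchy_attained domV (tight_game_poa_ratio network r_gt0 wc).
have poa_swap network : price_of_anarchy network (fun a b => b = r * a)
    (weight_poa_num r 1 / weight_poa_den r 1).
  apply: price_of_anarchy_attained domV (poa_ratios_swap _).
  by apply: (tight_game_poa_ratio network r_gt0); rewrite mulr1.
exists (weight_poa_num r 1 / weight_poa_den r 1).
split; first exact: weight_poa_crit_approx.
split; first by apply: poa.
split; first by apply: poa.
exists r; split.
  by rewrite ltr_norml; case/andP: r_bounds => ? ?; apply/andP; split; lra.
split; first by apply: poa; rewrite mulr1.
split; first by apply: poa; rewrite mulr1.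
by split; apply: poa_swap.
Qed.
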